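(* Let $p:E\to B$ be a morphism in $\mathbf{CLS}$ that is surjective, and let $E'$ be a closure space with the same underlying set as $E$ such that the identity map $1_E:E'\to E$ is a morphism in $\mathbf{CLS}$ (i.e. $\overline{Y}'\subseteq\overline{Y}$ for all $Y\subseteq E$). Let $E\times_BE'=\{(e,e')\mid p(e)=p(e')\}$ be the pullback in $\mathbf{CLS}$ of $p:E\to B$ and $p\circ 1_E:E'\to B$. Then the following are equivalent: (a) there exists a descent data for $p$ of the form $(E',1_E,\xi)$; (b) there exists a unique descent data for $p$ of the form $(E',1_E,\xi)$; (c) $(E',1_E,\pi_1)$ is a descent data for $p$, where $\pi_1:E\times_BE'\to E'$ is $\pi_1(e,e')=e$; (d) the first projection $\pi_1:E\times_BE'\to E'$, $(e,e')\mapsto e$, is a morphism in $\mathbf{CLS}$; (e) $\overline{Y}\cap p^{-1}\big(p(\overline{p^{-1}(p(Y))}')\big)\subseteq\overline{Y}'$ for all $Y\subseteq E$; (f) $\overline{Y}\cap p^{-1}\big(p(\overline{p^{-1}(p(Y))}')\big)=\overline{Y}'$ for all $Y\subseteq E$; (g) $\overline{Y}\cap p^{-1}\big(p(\overline{p^{-1}(p(Y))}')\big)\subseteq Y$ for all $Y\in\mathcal{C}_{E'}$; (h) $\overline{Y}\cap p^{-1}\big(p(\overline{p^{-1}(p(Y))}')\big)=Y$ for all $Y\in\mathcal{C}_{E'}$.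
   Context: A closure space is a pair $(A,\mathcal{C}_A)$ where $A$ is a set and $\mathcal{C}_A$ is a set of subsets of $A$ closed under arbitrary intersections (so $A\in\mathcal{C}_A$); elements of $\mathcal{C}_A$ are called closed. The category $\mathbf{CLS}$ has closure spaces as objects and, as morphisms $\alpha:A\to B$, maps with $\alpha^{-1}(B')\in\mathcal{C}_A$ for all $B'\in\mathcal{C}_B$. Pullbacks in $\mathbf{CLS}$ are set-theoretic pullbacks with closed sets $\pi_1^{-1}(E_0)\cap\pi_2^{-1}(A_0)$ for $E_0,A_0$ closed in the factors. Notation: for $Y\subseteq E$, $\overline{Y}$ is the closure in $E$ and $\overline{Y}'$ the closure in $E'$ (closure of $X$ in a space with closed sets $\mathcal{C}$ is $\bigcap_{X\subseteq C\in\mathcal{C}}C$). For a morphism $p:E\to B$ in a category with pullbacks, a descent data for $p$ is a triple $(C,\gamma,\xi)$ with $\gamma:C\to E$ and $\xi:E\times_BC\to C$, where $E\times_BC$ is the pullback of $p$ and $p\gamma$ with projections $\pi_1,\pi_2$, such that $\gamma\circ\xi=\pi_1$, $\xi\circ\langle\gamma,1_C\rangle=1_C$, and $\xi\circ(E\times_B\xi)=\xi\circ(E\times_B\pi_2)$ as morphisms $E\times_B(E\times_BC)\to C$ (in elements: $\xi(e,\xi(e',c))=\xi(e,c)$). *)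

From mathcomp Require Import all_boot.
From mathcomp Require Import boolp classical_sets.
Set Implicit Arguments. Unset Strict Implicit. Unset Printing Implicit Defensive.
Local Open Scope classical_set_scope.

(* A closure system on A: a family of subsets closed under arbitrary
   intersections (the empty intersection gives A itself). *)
Definition closure_system (A : Type) (C : set (set A)) : Prop :=
  forall F : set (set A), F `<=` C -> C (\bigcap_(X in F) X).

Definition cls_mor (A B : Type) (CA : set (set A)) (CB : set (set B))
  (f : A -> B) : Prop :=
  forall B', CB B' -> CA (f @^-1` B').

Definition cl (A : Type) (C : set (set A)) (X : set A) : set A :=
  \bigcap_(Z in [set Z | C Z /\ X `<=` Z]) Z.

Definition pb (E C B : Type) (f : E -> B) (g : C -> B) : Type :=
  {x : E * C | f x.1 = g x.2}.

Definition pb_closed (E C B : Type) (f : E -> B) (g : C -> B)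
  (CE : set (set E)) (CC : set (set C)) : set (set (pb f g)) :=
  [set Z | exists E0 A0, CE E0 /\ CC A0 /\
     Z = [set x : pb f g | E0 (sval x).1 /\ A0 (sval x).2]].

Arguments pb_closed {E C B} f g CE CC.

Definition descent_data (E B C : Type) (CE : set (set E)) (CB : set (set B))
  (p : E -> B) (CC : set (set C)) (gamma : C -> E)
  (xi : pb p (p \o gamma) -> C) : Prop :=
  [/\ cls_mor CC CE gamma,
      cls_mor (pb_closed p (p \o gamma) CE CC) CC xi,
      (forall x, gamma (xi x) = (sval x).1),
      (forall c : C, xi (exist _ (gamma c, c) erefl) = c) &
      (* xi (e, xi (e', c)) = xi (e, c) for all (e, (e', c)) in
         E x_B (E x_B C): here x = (e,c), z = (e',c), y = (e, xi z). *)
      (forall x y z : pb p (p \o gamma),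
          (sval y).1 = (sval x).1 -> (sval y).2 = xi z ->
          (sval z).2 = (sval x).2 -> xi y = xi x)].

Arguments descent_data {E B C} CE CB p CC gamma xi.

From mathcomp Require Import all_boot.
From mathcomp Require Import boolp classical_sets.
Local Open Scope classical_set_scope.

(* Since [1_E] is the descent map, [gamma \o xi = pi1] forces [xi = pi1], so
   everything hinges on whether [pi1 : E x_B E' -> E'] is continuous.  A set
   of the pullback is closed iff it is cut out by closed sets of [E] and [E'];
   the smallest such neighbourhood of the graph of a closed [Y] of [E'] is
   [cl_E Y x cl_E' (p^-1 p Y)], whose first projection is the set
   [cl_E Y `&` p^-1 (p (cl_E' (p^-1 p Y)))].  Hence [pi1] is continuous iff
   this set collapses to [Y] for every closed [Y], and by monotonicity the
   same inclusion then holds with [cl_E' Y] on the right for arbitrary [Y]. *)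

Section Closure.
Variables (A : Type) (C : set (set A)).

Lemma cl_sub X : X `<=` cl C X.
Proof. by move=> x Xx Z [_ XZ]; apply: XZ. Qed.

Lemma cl_closed X : closure_system C -> C (cl C X).
Proof. by move=> HC; apply: HC => Z []. Qed.

Lemma cl_min X Z : C Z -> X `<=` Z -> cl C X `<=` Z.
Proof. by move=> CZ XZ x; apply; split. Qed.

Lemma cl_mono X Y : X `<=` Y -> cl C X `<=` cl C Y.
Proof. by move=> XY x Hx Z [CZ YZ]; apply: Hx; split => // y /XY /YZ. Qed.

Lemma cl_id Y : closure_system C -> C Y -> cl C Y = Y.
Proof.
by move=> HC CY; apply/seteqP; split; [exact: cl_min | exact: cl_sub].
Qed.

End Closure.

Arguments cl_sub {A C X}.
Arguments cl_closed {A C} X.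
Arguments cl_min {A C X Z}.
Arguments cl_mono {A C X Y}.

Lemma cl_finer (A : Type) (C C' : set (set A)) (X : set A) :
  closure_system C -> cls_mor C' C (fun a : A => a) -> cl C' X `<=` cl C X.
Proof.
by move=> HC idmor; apply: cl_min; [exact: (idmor _ (cl_closed _ HC)) | exact: cl_sub].
Qed.

Section Descent.
Variables (E B : Type) (CE CE' : set (set E)) (CB : set (set B)) (p : E -> B).

Local Notation pbE := (pb p (p \o (fun e : E => e))).
Local Notation fst_pb := (fun x : pbE => (sval x).1).

Definition descent_cl (Y : set E) : set E :=
  cl CE Y `&` p @^-1` (p @` cl CE' (p @^-1` (p @` Y))).

Lemma descent_cl_mono X Y : X `<=` Y -> descent_cl X `<=` descent_cl Y.
Proof.
move=> XY e [Xe [e' Xe' pe']]; split; first exact: cl_mono Xe.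
by exists e' => //; apply: cl_mono Xe' => z [x /XY Yx pxz]; exists x.
Qed.

Lemma sub_descent_cl Y : Y `<=` descent_cl Y.
Proof. by move=> y Yy; split; [exact: cl_sub | exists y => //; apply: cl_sub; exists y]. Qed.

Lemma cl_sub_descent_cl Y :
  closure_system CE -> cls_mor CE' CE (fun e : E => e) ->
  cl CE' Y `<=` descent_cl Y.
Proof.
move=> HE idmor e Ye; split; first exact: cl_finer Ye.
by exists e => //; apply: cl_mono Ye => y Yy; exists y.
Qed.

Lemma descent_data_id_fst xi :
  descent_data CE CB p CE' (fun e : E => e) xi -> xi = fst_pb.
Proof. by move=> [_ _ xi_fst _ _]; apply: funext => x; rewrite xi_fst. Qed.

Lemma fst_pb_mor_descent_cl_sub :
  cls_mor (pb_closed p (p \o (fun e : E => e)) CE CE') CE' fst_pb ->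
  forall Y, CE' Y -> descent_cl Y `<=` Y.
Proof.
move=> fst_mor Y CY e [Ye [e' Ye' pe']].
have [E0 [A0 [CE0 [CA0 defY]]]] := fst_mor Y CY.
have inY a b (h : p a = p b) : Y a <-> E0 a /\ A0 b.
  by have := congr1 (fun S => S (exist _ (a, b) h)) defY => /= ->.
apply/(inY e e' (esym pe')); split.
  by apply: (cl_min CE0 _ e Ye) => y /(inY y y erefl)[].
by apply: (cl_min CA0 _ e' Ye') => z [y Yy pyz]; case: ((inY y z pyz).1 Yy).
Qed.

Lemma descent_cl_sub_fst_pb_mor :
  closure_system CE -> closure_system CE' ->
  (forall Y, CE' Y -> descent_cl Y `<=` Y) ->
  cls_mor (pb_closed p (p \o (fun e : E => e)) CE CE') CE' fst_pb.
Proof.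
move=> HE HE' desc_sub Y CY.
exists (cl CE Y), (cl CE' (p @^-1` (p @` Y))).
do 2 (split; first exact: cl_closed).
apply/seteqP; split => [[[a b] h] /= Ya|[[a b] h] /= [Ya Yb]].
  by split; [exact: cl_sub | apply: cl_sub; exists a].
by apply: desc_sub => //; split => //; exists b.
Qed.

Lemma descent_cl_sub_cl :
  closure_system CE' -> (forall Y, CE' Y -> descent_cl Y `<=` Y) ->
  forall Y, descent_cl Y `<=` cl CE' Y.
Proof.
move=> HE' desc_sub Y.
apply: subset_trans (desc_sub _ (cl_closed Y HE')).
by apply: descent_cl_mono; exact: cl_sub.
Qed.

Lemma descent_data_fst_pb :
  cls_mor CE' CE (fun e : E => e) ->
  cls_mor (pb_closed p (p \o (fun e : E => e)) CE CE') CE' fst_pb ->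
  descent_data CE CB p CE' (fun e : E => e) fst_pb.
Proof. by move=> idmor fst_mor; split => // x y z ->. Qed.

End Descent.

Arguments descent_data_id_fst {E B CE CE' CB p xi}.

Theorem lemma4p1 (E B : Type) (CE CE' : set (set E)) (CB : set (set B))
  (p : E -> B) :
  closure_system CE -> closure_system CE' -> closure_system CB ->
  cls_mor CE CB p -> (forall b : B, exists e : E, p e = b) ->
  cls_mor CE' CE (fun e : E => e) ->
  [<-> (exists xi, descent_data CE CB p CE' (fun e : E => e) xi);
       (exists! xi, descent_data CE CB p CE' (fun e : E => e) xi);
       descent_data CE CB p CE' (fun e : E => e) (fun x => (sval x).1);
       cls_mor (pb_closed p (p \o (fun e : E => e)) CE CE') CE'
         (fun x : pb p (p \o (fun e : E => e)) => (sval x).1);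
       (forall Y : set E,
          cl CE Y `&` p @^-1` (p @` cl CE' (p @^-1` (p @` Y))) `<=` cl CE' Y);
       (forall Y : set E,
          cl CE Y `&` p @^-1` (p @` cl CE' (p @^-1` (p @` Y))) = cl CE' Y);
       (forall Y : set E, CE' Y ->
          cl CE Y `&` p @^-1` (p @` cl CE' (p @^-1` (p @` Y))) `<=` Y);
       (forall Y : set E, CE' Y ->
          cl CE Y `&` p @^-1` (p @` cl CE' (p @^-1` (p @` Y))) = Y)].
Proof.
move=> HE HE' _ _ _ idmor.
tfae.
- case=> xi xi_dd; exists xi; split=> // xi' /descent_data_id_fst ->.
  by rewrite (descent_data_id_fst xi_dd).
- by case=> xi [xi_dd _]; rewrite -(descent_data_id_fst xi_dd).
- by case.
- by move/fst_pb_mor_descent_cl_sub; exact: descent_cl_sub_cl.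
- move=> desc_sub Y; apply/seteqP; split; first exact: desc_sub.
  exact: cl_sub_descent_cl.
- by move=> desc_eq Y CY; rewrite desc_eq cl_id.
- move=> desc_sub Y CY; apply/seteqP; split; first exact: desc_sub.
  exact: sub_descent_cl.
- move=> desc_eq; exists (fun x => (sval x).1); apply: descent_data_fst_pb => //.
  by apply: descent_cl_sub_fst_pb_mor => // Y CY; rewrite /descent_cl desc_eq.
Qed.
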